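(* Let $H$ be a punctured torus, $(\alpha,\beta)$ a free basis of $\pi_1H$, $\rho:\pi_1H\to\mathrm{PSL}_2\mathbb{R}$ a representation, and $g=\rho(\alpha)$, $h=\rho(\beta)$. Then $\rho$ is virtually abelian but not abelian if and only if two of $\{g,h,gh\}$ are half-turns (elliptic elements of order $2$) about distinct points $q_1,q_2\in\mathbb{H}^2$ and the third is a non-trivial hyperbolic translation along the unique geodesic through $q_1$ and $q_2$.
   Context: A representation is virtually abelian if its image contains an abelian subgroup of finite index. *)

From HB Require Import structures.
From mathcomp Require Import all_boot all_order all_algebra.
From mathcomp Require Import reals.
Set Implicit Arguments. Unset Strict Implicit. Unset Printing Implicit Defensive.
Import Order.TTheory GRing.Theory Num.Theory.
Local Open Scope ring_scope.

Section PSL2.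
Variable R : realType.

(* Elements of PSL_2(R) are represented by matrices of SL_2(R); two matrices
   represent the same element of PSL_2(R) iff they are equal up to sign. *)
Definition peq (x y : 'M[R]_2) : Prop := x = y \/ x = - y.

Definition m00 (A : 'M[R]_2) := A ord0 ord0.
Definition m01 (A : 'M[R]_2) := A ord0 ord_max.
Definition m10 (A : 'M[R]_2) := A ord_max ord0.
Definition m11 (A : 'M[R]_2) := A ord_max ord_max.

(* The image rho(pi_1 H) = <g, h> of the representation, as the (sign-closed)
   preimage in SL_2(R) of the subgroup of PSL_2(R) generated by g and h. *)
Inductive in_img (g h : 'M[R]_2) : 'M[R]_2 -> Prop :=
| img_one : in_img g h 1%:M
| img_neg x : in_img g h x -> in_img g h (- x)
| img_g x : in_img g h x -> in_img g h (g *m x)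
| img_h x : in_img g h x -> in_img g h (h *m x)
| img_ginv x : in_img g h x -> in_img g h (invmx g *m x)
| img_hinv x : in_img g h x -> in_img g h (invmx h *m x).

Definition rep_abelian (g h : 'M[R]_2) : Prop :=
  forall x y, in_img g h x -> in_img g h y -> peq (x *m y) (y *m x).

(* A subgroup of PSL_2(R) is given by a subgroup A of SL_2(R) (its
   image in PSL_2(R)); finite index = finitely many left cosets cover. *)
Definition virt_abelian (g h : 'M[R]_2) : Prop :=
  exists A : 'M[R]_2 -> Prop,
    (forall x, A x -> in_img g h x) /\
    A 1%:M /\
    (forall x y, A x -> A y -> A (x *m y)) /\
    (forall x, A x -> A (invmx x)) /\
    (forall x y, A x -> A y -> peq (x *m y) (y *m x)) /\
    exists cs : seq 'M[R]_2,
      forall x, in_img g h x ->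
        exists c, c \in cs /\ exists a, A a /\ peq x (c *m a).

(* The upper half-plane model of H^2: points (x, y) with y > 0. *)
Definition inH (p : R * R) : Prop := 0 < p.2.

(* Moebius action z |-> (a z + b) / (c z + d), in coordinates z = x + i y. *)
Definition mob (A : 'M[R]_2) (p : R * R) : R * R :=
  let a := m00 A in let b := m01 A in let c := m10 A in let d := m11 A in
  let x := p.1 in let y := p.2 in
  let D := (c * x + d) ^+ 2 + (c * y) ^+ 2 in
  ((a * c * (x ^+ 2 + y ^+ 2) + (a * d + b * c) * x + b * d) / D,
   (a * d - b * c) * y / D).

Definition elliptic (A : 'M[R]_2) : Prop := `|\tr A| < 2.
Definition hyperbolic (A : 'M[R]_2) : Prop := 2 < `|\tr A|.

Definition half_turn (q : R * R) (A : 'M[R]_2) : Prop :=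
  elliptic A /\ peq (A *m A) 1%:M /\ ~ peq A 1%:M /\ mob A q = q.

Definition geodesic (L : R * R -> Prop) : Prop :=
  (exists a : R, forall p, L p <-> (inH p /\ p.1 = a)) \/
  (exists c r : R, 0 < r /\
     forall p, L p <-> (inH p /\ (p.1 - c) ^+ 2 + p.2 ^+ 2 = r ^+ 2)).

(* A is a non-trivial hyperbolic translation along the geodesic through q1, q2
   (for distinct q1, q2 this geodesic exists and is unique). *)
Definition hyp_along (q1 q2 : R * R) (A : 'M[R]_2) : Prop :=
  hyperbolic A /\ ~ peq A 1%:M /\
  exists L, geodesic L /\ L q1 /\ L q2 /\
    (forall p, L p -> L (mob A p)) /\
    (forall p, L p -> exists p', L p' /\ mob A p' = p).

Definition config (a b c : 'M[R]_2) : Prop :=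
  exists q1 q2 : R * R, inH q1 /\ inH q2 /\ q1 <> q2 /\
    half_turn q1 a /\ half_turn q2 b /\ hyp_along q1 q2 c.

End PSL2.

From HB Require Import structures.
From mathcomp Require Import all_boot all_order all_algebra.
From mathcomp Require Import reals.
From mathcomp Require Import ring lra.
From Stdlib Require Import Classical.
Set Implicit Arguments. Unset Strict Implicit. Unset Printing Implicit Defensive.
Import Order.TTheory GRing.Theory Num.Theory.
Local Open Scope ring_scope.

(* Elements of PSL_2(R) are represented by matrices of SL_2(R) up to sign, so "commuting"
   means commuting up to sign.  If the image is virtually abelian, a uniform power x ^+ M of
   every element lies in the abelian subgroup of finite index.  If some x ^+ M is hyperbolic,
   it commutes with all its conjugates, and then every element of the image commutes or
   anticommutes with the traceless part v of x ^+ M, a spacelike vector of the Minkowski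
   space of traceless matrices.  Otherwise every element has |tr| <= 2, and the reversed
   Cauchy-Schwarz inequality in that Minkowski space forces g and h to commute.  An element
   anticommuting with a spacelike v is a half-turn about a point of the geodesic attached to
   v, and one commuting with v translates along that geodesic; sorting g, h and g h by this
   sign yields the configuration.  Conversely, half-turns a, b about distinct points both
   anticommute with the spacelike v = a b - b a, and the elements commuting with v form an
   abelian subgroup of index at most 2. *)

Section Coordinates.
Variable R : comUnitRingType.

Definition mx22 (a b c d : R) : 'M[R]_2 :=
  \matrix_(i < 2, j < 2) if i == 0 :> nat then (if j == 0 :> nat then a else b)
                         else (if j == 0 :> nat then c else d).

Lemma mx22P (x : 'M[R]_2) : exists a b c d, x = mx22 a b c d.
Proof.
exists (x 0 0), (x 0 1), (x 1 0), (x 1 1); apply/matrixP => i j; rewrite mxE.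
by case: i => [[|[|//]] Hi]; case: j => [[|[|//]] Hj]; congr (x _ _); apply/val_inj.
Qed.

Lemma mx22_inj a b c d a' b' c' d' :
  mx22 a b c d = mx22 a' b' c' d' -> [/\ a = a', b = b', c = c' & d = d'].
Proof.
move=> /matrixP E; have := E 0 0; have := E 0 1; have := E 1 0; have := E 1 1.
by rewrite !mxE /= => -> -> -> ->.
Qed.

Ltac entrywise := apply/matrixP => -[[|[|//]] ?] [[|[|//]] ?]; rewrite !mxE.

Lemma mx22_0 : mx22 0 0 0 0 = 0.
Proof. by entrywise. Qed.

Lemma scalar_mx22 (k : R) : k%:M = mx22 k 0 0 k.
Proof. by entrywise. Qed.

Lemma opp_mx22 a b c d : - mx22 a b c d = mx22 (- a) (- b) (- c) (- d).
Proof. by entrywise. Qed.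

Lemma add_mx22 a b c d a' b' c' d' :
  mx22 a b c d + mx22 a' b' c' d' = mx22 (a + a') (b + b') (c + c') (d + d').
Proof. by entrywise. Qed.

Lemma sub_mx22 a b c d a' b' c' d' :
  mx22 a b c d - mx22 a' b' c' d' = mx22 (a - a') (b - b') (c - c') (d - d').
Proof. by rewrite opp_mx22 add_mx22. Qed.

Lemma scale_mx22 k a b c d : k *: mx22 a b c d = mx22 (k * a) (k * b) (k * c) (k * d).
Proof. by entrywise. Qed.

Lemma mul_mx22 a b c d a' b' c' d' :
  mx22 a b c d *m mx22 a' b' c' d' =
  mx22 (a * a' + b * c') (a * b' + b * d') (c * a' + d * c') (c * b' + d * d').
Proof.
by apply/matrixP => -[[|[|//]] ?] [[|[|//]] ?]; rewrite !mxE !big_ord_recl big_ord0 !mxE addr0.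
Qed.

Lemma det_mx22 a b c d : \det (mx22 a b c d) = a * d - b * c.
Proof.
rewrite (expand_det_row _ 0) !big_ord_recl big_ord0 /cofactor !det_mx11 !mxE /=.
by rewrite expr0 expr1 addr0 mul1r mulN1r mulrN.
Qed.

Lemma tr_mx22 a b c d : \tr (mx22 a b c d) = a + d.
Proof. by rewrite /mxtrace !big_ord_recl big_ord0 !mxE /= addr0. Qed.

Lemma inv_mx22 a b c d :
  a * d - b * c = 1 -> invmx (mx22 a b c d) = mx22 d (- b) (- c) a.
Proof.
move=> det1; have U : mx22 a b c d \in unitmx by rewrite unitmxE det_mx22 det1 unitr1.
have E : mx22 a b c d *m mx22 d (- b) (- c) a = 1%:M.
  by rewrite mul_mx22 scalar_mx22; congr mx22; rewrite -?det1; ring.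
by rewrite -[invmx _]mulmx1 -E mulKmx.
Qed.

End Coordinates.

Section SL2.
Variable R : comUnitRingType.
Implicit Types x y z : 'M[R]_2.

Lemma sl2_unit x : \det x = 1 -> x \in unitmx.
Proof. by move=> dx; rewrite unitmxE dx unitr1. Qed.

Lemma sl2_inv x : \det x = 1 -> \det (invmx x) = 1.
Proof. by move=> dx; rewrite det_inv dx invr1. Qed.

Lemma sl2_mul x y : \det x = 1 -> \det y = 1 -> \det (x *m y) = 1.
Proof. by move=> dx dy; rewrite det_mulmx dx dy mulr1. Qed.

Lemma det_opp x : \det (- x) = \det x.
Proof. by rewrite -scaleN1r detZ -signr_odd /= mul1r. Qed.

Lemma invmxN x : invmx (- x) = - invmx x.
Proof. exact: (@invrN _ x). Qed.

Lemma invmxM x y : x \in unitmx -> y \in unitmx -> invmx (x *m y) = invmx y *m invmx x.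
Proof. exact: (@invrM _ x y). Qed.

Lemma comm_invmx x v : x *m v = v *m x -> invmx x *m v = v *m invmx x.
Proof. by move=> xv; exact: esym (commrV (esym xv)). Qed.

Lemma anticomm_invmx x v : x \in unitmx -> x *m v = - (v *m x) ->
  invmx x *m v = - (v *m invmx x).
Proof.
move=> ux xv; apply: (can_inj (mulKmx ux)).
by rewrite mulKVmx // mulmxN mulmxA xv mulNmx opprK mulmxK.
Qed.

End SL2.

Section ProjectiveEquality.
Variable R : realType.
Implicit Types x y z : 'M[R]_2.

Lemma peq_refl x : peq x x.
Proof. by left. Qed.

Lemma peq_sym x y : peq x y -> peq y x.
Proof. by case=> ->; [left | right; rewrite opprK]. Qed.

Lemma peq_trans x y z : peq x y -> peq y z -> peq x z.
Proof. by case=> -> [] ->; rewrite ?opprK; [left | right | right | left]. Qed.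

Lemma peq_mull z x y : peq x y -> peq (z *m x) (z *m y).
Proof. by case=> ->; [left | right; rewrite mulmxN]. Qed.

Lemma peq_mulr z x y : peq x y -> peq (x *m z) (y *m z).
Proof. by case=> ->; [left | right; rewrite mulNmx]. Qed.

Lemma peq_mul2l z x y : z \in unitmx -> peq (z *m x) (z *m y) -> peq x y.
Proof. by move=> uz /(peq_mull (invmx z)); rewrite !mulKmx. Qed.

Lemma peq_mul2r z x y : z \in unitmx -> peq (x *m z) (y *m z) -> peq x y.
Proof. by move=> uz /(peq_mulr (invmx z)); rewrite !mulmxK. Qed.

Lemma peq_det x y : peq x y -> \det x = \det y.
Proof. by case=> ->; rewrite ?det_opp. Qed.

Definition pcomm x y := peq (x *m y) (y *m x).

Lemma pcomm_sym x y : pcomm x y -> pcomm y x.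
Proof. exact: peq_sym. Qed.

Lemma pcomm_peq x x' y y' : peq x x' -> peq y y' -> pcomm x' y' -> pcomm x y.
Proof.
move=> xx yy xy; apply: peq_trans (peq_mulr _ xx) _; apply: peq_trans (peq_mull _ yy) _.
apply: peq_trans xy _; apply: peq_sym.
by apply: peq_trans (peq_mulr _ yy) _; apply: peq_mull.
Qed.

Lemma pcomm1 x : pcomm 1%:M x.
Proof. by rewrite /pcomm mul1mx mulmx1; left. Qed.

Lemma pcommN x y : pcomm x y -> pcomm (- x) y.
Proof. by rewrite /pcomm mulNmx mulmxN => -[] ->; [left | right]. Qed.

Lemma pcommM x y z : pcomm x z -> pcomm y z -> pcomm (x *m y) z.
Proof.
move=> xz yz; rewrite /pcomm -mulmxA.
by apply: (peq_trans (peq_mull x yz)); rewrite !mulmxA; apply: peq_mulr.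
Qed.

Lemma pcommV x y : \det x = 1 -> pcomm x y -> pcomm (invmx x) y.
Proof.
move=> dx xy; have ux := sl2_unit dx.
apply: (peq_mul2l ux); apply: (peq_mul2r ux).
by rewrite mulKVmx // mulmxA mulmxKV //; exact: peq_sym.
Qed.

Lemma pcomm_peq1 x y : peq y 1%:M -> pcomm x y.
Proof. by case=> ->; left; rewrite ?mulmxN ?mulNmx mulmx1 mul1mx. Qed.

Lemma pcomm_of_peq1 x y : y \in unitmx -> peq (x *m y) 1%:M -> pcomm x y.
Proof.
move=> uy xy1; apply: (peq_trans xy1); apply: peq_sym.
by have := peq_mulr (invmx y) (peq_mull y xy1); rewrite !mulmxA mulmxK // mulmx1 mulmxV.
Qed.

End ProjectiveEquality.

Section Image.
Variable R : realType.
Variables g h : 'M[R]_2.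
Hypotheses (dg : \det g = 1) (dh : \det h = 1).
Implicit Types x y v : 'M[R]_2.

Lemma in_img_det x : in_img g h x -> \det x = 1.
Proof.
elim=> {x} [|x _ dx|x _ dx|x _ dx|x _ dx|x _ dx]; rewrite ?det1 ?det_opp //.
all: by rewrite sl2_mul ?sl2_inv.
Qed.

Lemma in_img_mul x y : in_img g h x -> in_img g h y -> in_img g h (x *m y).
Proof.
move=> Ix Iy; elim: Ix => {x} [|x _ IH|x _ IH|x _ IH|x _ IH|x _ IH].
- by rewrite mul1mx.
- by rewrite mulNmx; apply: img_neg.
all: by rewrite -mulmxA; constructor.
Qed.

Lemma in_img_gens : [/\ in_img g h g, in_img g h h, in_img g h (invmx g) & in_img g h (invmx h)].
Proof. by split; rewrite -[X in in_img _ _ X]mulmx1; do 2!constructor. Qed.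

Lemma in_img_inv x : in_img g h x -> in_img g h (invmx x).
Proof.
have [Ig Ih Igi Ihi] := in_img_gens.
elim=> {x} [|x _ IH|x Ix IH|x Ix IH|x Ix IH|x Ix IH].
- by rewrite invmx1; constructor.
- by rewrite invmxN; constructor.
all: have dx := in_img_det Ix.
all: by rewrite invmxM ?sl2_unit ?sl2_inv ?invmxK //; apply: in_img_mul.
Qed.

Lemma in_img_exp x n : in_img g h x -> in_img g h (x ^+ n).
Proof.
move=> Ix; elim: n => [|n IH]; first by rewrite expr0; constructor.
by rewrite exprS; apply: in_img_mul.
Qed.

Lemma in_img_pcomm v x : pcomm g v -> pcomm h v -> in_img g h x -> pcomm x v.
Proof.
move=> gv hv; elim=> {x} [|x _ IH|x _ IH|x _ IH|x _ IH|x _ IH].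
- exact: pcomm1.
- exact: pcommN.
- exact: pcommM.
- exact: pcommM.
- by apply: pcommM => //; apply: pcommV.
- by apply: pcommM => //; apply: pcommV.
Qed.

Lemma rep_abelianP : rep_abelian g h <-> pcomm g h.
Proof.
have [Ig Ih _ _] := in_img_gens; split=> [ab | gh x y Ix Iy]; first exact: ab.
have xg z : in_img g h z -> pcomm z g.
  by apply: in_img_pcomm; [apply: peq_refl | apply: pcomm_sym].
have xh z : in_img g h z -> pcomm z h by apply: in_img_pcomm => //; apply: peq_refl.
exact: in_img_pcomm (pcomm_sym (xg _ Iy)) (pcomm_sym (xh _ Iy)) Ix.
Qed.

End Image.

(* Traceless matrices, with the quadratic form [det] and its polar form [- tr (p q) / 2],
   form the Minkowski space R^{1,2}: [p] is timelike when [0 < det p], lightlike when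
   [det p = 0] and spacelike when [det p < 0]. *)
Section Traceless.
Variable R : realFieldType.
Implicit Types p q v w x y : 'M[R]_2.

Lemma tracelessP p : \tr p = 0 -> exists a b c, p = mx22 a b c (- a).
Proof.
have [a [b [c [d ->]]]] := mx22P p; rewrite tr_mx22 => ad0.
by exists a, b, c; congr mx22; lra.
Qed.

Lemma traceless_sq p : \tr p = 0 -> p *m p = (- \det p)%:M.
Proof.
by move=> /tracelessP [a [b [c ->]]]; rewrite mul_mx22 det_mx22 scalar_mx22; congr mx22; ring.
Qed.

Lemma traceless_anticomm p q : \tr p = 0 -> \tr q = 0 ->
  p *m q + q *m p = (\tr (p *m q))%:M.
Proof.
move=> /tracelessP [a [b [c ->]]] /tracelessP [d [e [f ->]]].
by rewrite !mul_mx22 add_mx22 tr_mx22 scalar_mx22; congr mx22; ring.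
Qed.

Lemma det_commutator_traceless p q : \tr p = 0 -> \tr q = 0 ->
  \det (p *m q - q *m p) = 4 * \det p * \det q - \tr (p *m q) ^+ 2.
Proof.
move=> /tracelessP [a [b [c ->]]] /tracelessP [d [e [f ->]]].
by rewrite !mul_mx22 sub_mx22 !det_mx22 tr_mx22; ring.
Qed.

Lemma tr_mul_commutator p q : \tr (p *m (p *m q - q *m p)) = 0.
Proof.
by rewrite mulmxBr mxtraceD raddfN /= !mulmxA [\tr (p *m q *m p)]mxtrace_mulC mulmxA subrr.
Qed.

Lemma sqr_eq0 (r : R) : r ^+ 2 = 0 -> r = 0.
Proof. by move/eqP; rewrite sqrf_eq0 => /eqP. Qed.

Lemma orth_timelike_eq0 p q : \tr p = 0 -> \tr q = 0 ->
  0 < \det p -> 0 <= \det q -> \tr (p *m q) = 0 -> q = 0.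
Proof.
move=> /tracelessP [a [b [c ->]]] /tracelessP [d [e [f ->]]].
rewrite mul_mx22 !det_mx22 tr_mx22 => Dp Dq orth.
set P := _ - b * c in Dp; set Q := _ - e * f in Dq.
pose u := (b + c) / 2; pose s := (e + f) / 2; pose t := (e - f) / 2.
(* In the Minkowski coordinates [(a, u, w)] and [(d, s, t)], with [w = (b - c) / 2],
   this is the reversed Cauchy-Schwarz inequality. *)
have key : P * t ^+ 2 + (a ^+ 2 + u ^+ 2) * Q + (a * s - u * d) ^+ 2 = 0.
  have -> : P * t ^+ 2 + (a ^+ 2 + u ^+ 2) * Q + (a * s - u * d) ^+ 2 =
    - ((a * d + b * f + (c * e + - a * - d)) / 2) * ((b - c) / 2 * t + a * d + u * s).
    by rewrite /P /Q /u /s /t; field.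
  by rewrite orth mul0r oppr0 mul0r.
have t0 : t = 0.
  have := mulr_ge0 (addr_ge0 (sqr_ge0 a) (sqr_ge0 u)) Dq.
  have := mulr_ge0 (ltW Dp) (sqr_ge0 t).
  have := sqr_ge0 (a * s - u * d); move=> *.
  apply: sqr_eq0; apply: (mulfI (lt0r_neq0 Dp)); rewrite mulr0; lra.
have [es ft] : e = s + t /\ f = s - t by rewrite /s /t; split; field.
have [d0 s0] : d = 0 /\ s = 0.
  move: Dq; rewrite /Q es ft t0 addr0 => Dq.
  by split; apply: sqr_eq0; nra.
by rewrite -mx22_0 es ft d0 s0 t0 oppr0 addr0.
Qed.

Lemma orth_lightlike_comm p q : \tr p = 0 -> \tr q = 0 ->
  \det p = 0 -> \det q = 0 -> \tr (p *m q) = 0 -> p *m q = q *m p.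
Proof.
move=> /tracelessP [a [b [c ->]]] /tracelessP [d [e [f ->]]].
rewrite !mul_mx22 !det_mx22 tr_mx22 => Dp Dq orth.
have X0 : b * f + c * e + 2 * a * d = 0 by lra.
have Y0 : a ^+ 2 + b * c = 0 by lra.
have Z0 : d ^+ 2 + e * f = 0 by lra.
have E1 : b * f - c * e = 0.
  apply: sqr_eq0; rewrite (_ : _ ^+ 2 =
    (b * f + c * e + 2 * a * d) * (b * f + c * e - 2 * a * d)
    - 4 * (a ^+ 2 + b * c) * (e * f) + 4 * a ^+ 2 * (d ^+ 2 + e * f)); last by ring.
  by rewrite X0 Y0 Z0; ring.
have E2 : a * e - b * d = 0.
  apply: sqr_eq0; rewrite (_ : _ ^+ 2 = - (b * e) * (b * f + c * e + 2 * a * d)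
    + e ^+ 2 * (a ^+ 2 + b * c) + b ^+ 2 * (d ^+ 2 + e * f)); last by ring.
  by rewrite X0 Y0 Z0; ring.
have E3 : c * d - a * f = 0.
  apply: sqr_eq0; rewrite (_ : _ ^+ 2 = - (c * f) * (b * f + c * e + 2 * a * d)
    + f ^+ 2 * (a ^+ 2 + b * c) + c ^+ 2 * (d ^+ 2 + e * f)); last by ring.
  by rewrite X0 Y0 Z0; ring.
by congr mx22; lra.
Qed.

End Traceless.

Section TracelessPart.
Variable R : realFieldType.
Implicit Types p q v w x y : 'M[R]_2.

Definition trfree x := x - (\tr x / 2)%:M.

Lemma trfreeE x : x = trfree x + (\tr x / 2)%:M.
Proof. by rewrite subrK. Qed.

Lemma tr_trfree x : \tr (trfree x) = 0.
Proof. by rewrite mxtraceD raddfN /= mxtrace_scalar; field. Qed.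

Lemma trfree_id p : \tr p = 0 -> trfree p = p.
Proof. by move=> tp; rewrite /trfree tp mul0r scalar_mx22 mx22_0 subr0. Qed.

Lemma det_trfree x : \det (trfree x) = \det x - \tr x ^+ 2 / 4.
Proof.
have [a [b [c [d ->]]]] := mx22P x.
by rewrite /trfree tr_mx22 scalar_mx22 sub_mx22 !det_mx22; field.
Qed.

Lemma commutator_trfree x y :
  trfree x *m trfree y - trfree y *m trfree x = x *m y - y *m x.
Proof.
have [a [b [c [d ->]]]] := mx22P x; have [a' [b' [c' [d' ->]]]] := mx22P y.
by rewrite /trfree !tr_mx22 !scalar_mx22 !sub_mx22 !mul_mx22 !sub_mx22; congr mx22; field.
Qed.

Lemma comm_trfree x y :
  (trfree x *m trfree y == trfree y *m trfree x) = (x *m y == y *m x).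
Proof. by rewrite -subr_eq0 commutator_trfree subr_eq0. Qed.

Lemma trfree_conj y x : y \in unitmx ->
  trfree (y *m x *m invmx y) = y *m trfree x *m invmx y.
Proof.
move=> uy; have tc : \tr (y *m x *m invmx y) = \tr x.
  by rewrite mxtrace_mulC mulmxA mulVmx // mul1mx.
by rewrite /trfree tc mulmxBr mulmxBl scalar_mxC mulmxK.
Qed.

Lemma traceless_comm_scale p v : \tr p = 0 -> \tr v = 0 -> \det v != 0 ->
  p *m v = v *m p -> exists l, p = l *: v.
Proof.
move=> tp tv dv pv; exists (- \tr (p *m v) / (2 * \det v)).
(* [2 p v = tr (p v)] and [v ^ 2 = - det v], so [- 2 det v p = tr (p v) v]. *)
have E : (- (2 * \det v)) *: p = \tr (p *m v) *: v.
  have := congr1 (mulmx^~ v) (traceless_anticomm tp tv).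
  rewrite -pv mulmxDl -!mulmxA traceless_sq // mul_mx_scalar mul_scalar_mx -scalerDl.
  by move <-; congr (_ *: _); ring.
have nz : - (2 * \det v) != 0 by rewrite oppr_eq0 mulf_neq0 ?pnatr_eq0.
by rewrite -[LHS](scalerK nz) E scalerA; congr (_ *: _); field.
Qed.

Lemma centralizer_traceless x v : \tr v = 0 -> \det v != 0 ->
  x *m v = v *m x -> exists l m, x = l *: v + m%:M.
Proof.
move=> tv dv /eqP; rewrite -comm_trfree (trfree_id tv) => /eqP xv.
have [l E] := traceless_comm_scale (tr_trfree x) tv dv xv.
by exists l, (\tr x / 2); rewrite -E -trfreeE.
Qed.

Lemma centralizer_comm x y v : \tr v = 0 -> \det v != 0 ->
  x *m v = v *m x -> y *m v = v *m y -> x *m y = y *m x.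
Proof.
move=> tv dv /(centralizer_traceless tv dv) [l [m ->]].
move=> /(centralizer_traceless tv dv) [l' [m' ->]].
have [a [b [c ->]]] := tracelessP tv.
by rewrite !scale_mx22 !scalar_mx22 !add_mx22 !mul_mx22; congr mx22; ring.
Qed.

Lemma traceless_comm_sign w v : \tr v = 0 -> \tr w = 0 -> \det v != 0 ->
  \det w = \det v -> w *m v = v *m w -> w = v \/ w = - v.
Proof.
move=> tv tw dv dwv /(traceless_comm_scale tw tv dv) [l wl].
have : l ^+ 2 = 1 by apply: (mulIf dv); rewrite mul1r -[RHS]dwv wl detZ.
move/eqP; rewrite sqrf_eq1 => /orP [] /eqP l1; rewrite wl l1 ?scaleN1r ?scale1r; by [left | right].
Qed.

Lemma anticomm_trM x y : x *m y = - (y *m x) -> \tr (x *m y) = 0.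
Proof.
move=> E; have : \tr (x *m y) = - \tr (x *m y) by rewrite {1}E raddfN /= mxtrace_mulC.
lra.
Qed.

Lemma anticomm_tr0 x v : v \in unitmx -> x *m v = - (v *m x) -> \tr x = 0.
Proof.
move=> uv E; rewrite -[x](mulKmx uv) anticomm_trM // mulKmx //.
by rewrite -[v *m x]opprK -E mulNmx opprK mulmxK.
Qed.

Lemma nonspacelike_comm p q : \tr p = 0 -> \tr q = 0 ->
  0 <= \det p -> 0 <= \det q -> 0 <= \det (p *m q - q *m p) -> p *m q = q *m p.
Proof.
move=> tp tq Dp Dq DK; apply/eqP; rewrite -subr_eq0; apply/eqP.
have tK : \tr (p *m q - q *m p) = 0 by rewrite mxtraceD raddfN /= mxtrace_mulC subrr.
have [Pp|Zp] := ltrP 0 (\det p).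
  exact: orth_timelike_eq0 tp tK Pp DK (tr_mul_commutator p q).
have [Pq|Zq] := ltrP 0 (\det q).
  rewrite -opprB; apply/eqP; rewrite oppr_eq0; apply/eqP.
  apply: (orth_timelike_eq0 tq _ Pq _ (tr_mul_commutator q p)).
    by rewrite -opprB raddfN /= tK oppr0.
  by rewrite -opprB det_opp.
have [dp0 dq0] : \det p = 0 /\ \det q = 0 by split; apply/eqP; rewrite eq_le ?Zp ?Zq.
have /sqr_eq0 orth : \tr (p *m q) ^+ 2 = 0.
  apply/eqP; rewrite eq_le sqr_ge0 andbT -oppr_ge0.
  by move: DK; rewrite det_commutator_traceless // dp0 dq0 !mulr0 sub0r.
by apply/eqP; rewrite subr_eq0; apply/eqP; apply: orth_lightlike_comm.
Qed.

End TracelessPart.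

Section EllipticCommute.
Variable R : realFieldType.
Implicit Types g h : 'M[R]_2.

Lemma tr_commutator g h : \det g = 1 -> \det h = 1 ->
  \tr (g *m h *m invmx g *m invmx h) = 2 - \det (g *m h - h *m g).
Proof.
have [a [b [c [d ->]]]] := mx22P g; have [a' [b' [c' [d' ->]]]] := mx22P h.
rewrite !det_mx22 => dg dh; rewrite !inv_mx22 // !mul_mx22 sub_mx22 tr_mx22 det_mx22.
have -> : (2 : R) = 2 * (a * d - b * c) * (a' * d' - b' * c') by rewrite dg dh !mulr1.
ring.
Qed.

Lemma elliptic_comm g h : \det g = 1 -> \det h = 1 ->
  `|\tr g| <= 2 -> `|\tr h| <= 2 -> \tr (g *m h *m invmx g *m invmx h) <= 2 ->
  g *m h = h *m g.
Proof.
move=> dg dh tg th tgh; apply/eqP; rewrite -comm_trfree; apply/eqP.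
have nonspace (x : 'M[R]_2) : \det x = 1 -> `|\tr x| <= 2 -> 0 <= \det (trfree x).
  by move=> dx; rewrite det_trfree dx ler_norml => /andP [? ?]; nra.
apply: nonspacelike_comm; rewrite ?tr_trfree ?nonspace //.
by rewrite commutator_trfree; move: tgh; rewrite tr_commutator //; lra.
Qed.

End EllipticCommute.

Section Powers.
Variable R : realType.
Implicit Types x y : 'M[R]_2.

Lemma conj_exp y x n : y \in unitmx ->
  y *m x ^+ n *m invmx y = (y *m x *m invmx y) ^+ n.
Proof.
move=> uy; elim: n => [|n IH]; first by rewrite !expr0 mulmx1 mulmxV.
by rewrite !exprS -IH -!mulmxE !mulmxA mulmxKV.
Qed.

Lemma peq_exp x y n : peq x y -> peq (x ^+ n) (y ^+ n).
Proof.
case=> ->; first exact: peq_refl.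
by rewrite exprNn -signr_odd; case: odd; rewrite ?expr1 ?mulN1r ?expr0 ?mul1r; [right | left].
Qed.

Lemma peq_normtr x y : peq x y -> `|\tr x| = `|\tr y|.
Proof. by case=> ->; rewrite ?raddfN ?normrN. Qed.

Lemma sl2_cayley_hamilton x : \det x = 1 -> x *m x = \tr x *: x - 1%:M.
Proof.
have [a [b [c [d ->]]]] := mx22P x; rewrite det_mx22 => dx.
by rewrite mul_mx22 tr_mx22 scale_mx22 scalar_mx22 sub_mx22 -dx; congr mx22; ring.
Qed.

Lemma tr_exp_rec x n : \det x = 1 ->
  \tr (x ^+ n.+2) = \tr x * \tr (x ^+ n.+1) - \tr (x ^+ n).
Proof.
move=> dx; rewrite exprS exprS -!mulmxE mulmxA sl2_cayley_hamilton //.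
by rewrite mulmxBl mul1mx -scalemxAl mxtraceD raddfN /= mxtraceZ.
Qed.

Lemma recurrence_increasing (u : nat -> R) t : 2 < t -> u 0%N = 2 -> u 1%N = t ->
  (forall n, u n.+2 = t * u n.+1 - u n) -> forall n, 2 <= u n < u n.+1.
Proof.
move=> t2 u0 u1 rec; elim=> [|n /andP [IH1 IH2]]; first by rewrite u0 u1 lexx.
by rewrite rec; apply/andP; split; nra.
Qed.

Lemma hyperbolic_exp x n : \det x = 1 -> hyperbolic x -> (0 < n)%N -> hyperbolic (x ^+ n).
Proof.
move=> dx hx n0; wlog tx : x dx hx / 2 < \tr x.
  move=> base; move: (hx); rewrite /hyperbolic ltr_normr => /orP [/base -> // | tx].
  rewrite /hyperbolic -(peq_normtr (peq_exp n (_ : peq (- x) x))); last by right.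
  by apply: base; rewrite /hyperbolic ?det_opp ?raddfN ?normrN.
pose u k := \tr (x ^+ k).
have u0 : u 0%N = 2 by rewrite /u expr0 mxtrace1.
have u1 : u 1%N = \tr x by rewrite /u expr1.
have urec k : u k.+2 = \tr x * u k.+1 - u k by rewrite /u tr_exp_rec.
have /andP [] := recurrence_increasing tx u0 u1 urec n.-1.
by rewrite /u prednK // /hyperbolic => ? ?; rewrite ger0_norm; lra.
Qed.

End Powers.

Section FiniteIndex.
Variable R : realType.
Variables (g h : 'M[R]_2) (A : 'M[R]_2 -> Prop) (cs : seq 'M[R]_2).
Hypotheses (dg : \det g = 1) (dh : \det h = 1).
Hypotheses (A_img : forall x, A x -> in_img g h x) (A1 : A 1%:M).
Hypothesis AM : forall x y, A x -> A y -> A (x *m y).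
Hypothesis AV : forall x, A x -> A (invmx x).
Hypothesis cosets : forall x, in_img g h x ->
  exists c, c \in cs /\ exists a, A a /\ peq x (c *m a).

Lemma exp_in_subgroup x : in_img g h x ->
  exists k, (0 < k <= size cs)%N /\ exists2 a, A a & peq (x ^+ k) a.
Proof.
move=> Ix; have dA a : A a -> \det a = 1 by move/A_img/(in_img_det dg dh).
have /fin_all_exists [f Pf] (i : 'I_(size cs).+1) : exists ca : 'M[R]_2 * 'M[R]_2,
    [/\ ca.1 \in cs, A ca.2 & peq (x ^+ i) (ca.1 *m ca.2)].
  by have [c [cs_c [a [Aa xa]]]] := cosets (in_img_exp i Ix); exists (c, a).
have /injectivePn [i [j nij cij]] : ~~ injectiveb (fun i => (f i).1).
  apply/negP => /injectiveP inj.
  have := @uniq_leq_size _ [seq (f i).1 | i <- enum 'I_(size cs).+1] cs.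
  rewrite map_inj_uniq // enum_uniq size_map size_enum_ord ltnn => contra.
  suff : false by []; apply: contra => // _ /mapP [k _ ->].
  by have [] := Pf k.
wlog lt_ij : i j nij cij / (i < j)%N.
  move=> base; case: (ltngtP i j) => [|lt_ji|/val_inj eq_ij]; first exact: base.
    by apply: (base j i) => //; rewrite eq_sym.
  by rewrite eq_ij eqxx in nij.
exists (j - i)%N; split.
  by rewrite subn_gt0 lt_ij /= leq_subLR (leq_trans _ (leq_addl _ _)) // -ltnS.
have [cs_c Ai xi] := Pf i; have [_ Aj] := Pf j; rewrite -cij.
move: xi; set c := (f i).1; set ai := (f i).2; set aj := (f j).2 => xi xj.
have ui := sl2_unit (dA _ Ai).
have uc : c \in unitmx.
  rewrite unitmxE; have := peq_det xi.
  by rewrite det_mulmx (dA _ Ai) mulr1 (in_img_det dg dh (in_img_exp _ Ix)) => <-; exact: unitr1.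
exists (invmx ai *m aj); first by apply: AM => //; apply: AV.
apply: (peq_mul2l ui); rewrite mulKVmx //; apply: (peq_mul2l uc); rewrite mulmxA.
apply: peq_trans (peq_mulr _ (peq_sym xi)) _.
by rewrite mulmxE -exprD subnKC // ltnW.
Qed.

Lemma fact_exp_in_subgroup x : in_img g h x ->
  exists2 a, A a & peq (x ^+ (size cs)`!) a.
Proof.
move=> /exp_in_subgroup [k [/andP [k0 kN] [a Aa xa]]].
have /dvdnP [m ->] : (k %| (size cs)`!)%N by apply: dvdn_fact; rewrite k0.
exists (a ^+ m); first by elim: m => [|m IH]; rewrite ?expr0 // exprS; apply: AM.
by rewrite mulnC exprM; apply: peq_exp.
Qed.

End FiniteIndex.

Lemma virt_abelian_exp_pcomm (R : realType) (g h : 'M[R]_2) :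
  \det g = 1 -> \det h = 1 -> virt_abelian g h ->
  exists2 M, (0 < M)%N & forall x y, in_img g h x -> in_img g h y -> pcomm (x ^+ M) (y ^+ M).
Proof.
move=> dg dh [A [A_img [A1 [AM [AV [Acomm [cs cosets]]]]]]].
exists (size cs)`!; first exact: fact_gt0.
move=> x y /(fact_exp_in_subgroup dg dh A_img A1 AM AV cosets) [a Aa xa].
move=> /(fact_exp_in_subgroup dg dh A_img A1 AM AV cosets) [b Ab yb].
exact: pcomm_peq xa yb (Acomm _ _ Aa Ab).
Qed.

Section Axis.
Variable R : realType.
Implicit Types v w x y X Z : 'M[R]_2.

Definition spacelike v := \tr v = 0 /\ \det v < 0.

Lemma spacelike_trfree X : \det X = 1 -> hyperbolic X -> spacelike (trfree X).
Proof.
move=> dX; rewrite /hyperbolic ltr_normr => hX; split; first exact: tr_trfree.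
by rewrite det_trfree dX; case/orP: hX => ?; nra.
Qed.

Lemma hyperbolic_pcomm_comm X Z : hyperbolic X -> Z \in unitmx -> pcomm X Z ->
  X *m Z = Z *m X.
Proof.
move=> hX uZ [] // /(anticomm_tr0 uZ) tX.
by exfalso; move: hX; rewrite /hyperbolic tX normr0; lra.
Qed.

Lemma conj_comm_pcomm v y : \tr v = 0 -> \det v != 0 -> y \in unitmx ->
  (y *m v *m invmx y) *m v = v *m (y *m v *m invmx y) -> pcomm y v.
Proof.
move=> tv dv uy; set w := y *m v *m invmx y => wv.
have tw : \tr w = 0 by rewrite mxtrace_mulC mulmxA mulVmx // mul1mx.
have dw : \det w = \det v.
  by rewrite !det_mulmx det_inv mulrAC mulrV ?mul1r // -unitmxE.
have wy : w *m y = y *m v by rewrite mulmxKV.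
by rewrite /pcomm -wy; case: (traceless_comm_sign tv tw dv dw wv) => ->;
  rewrite ?mulNmx; [left | right].
Qed.

Section HyperbolicPower.
Variables (g h : 'M[R]_2) (M : nat).
Hypotheses (dg : \det g = 1) (dh : \det h = 1).
Hypothesis pcomm_exp : forall x y, in_img g h x -> in_img g h y -> pcomm (x ^+ M) (y ^+ M).

Lemma hyperbolic_exp_axis x y : in_img g h x -> hyperbolic (x ^+ M) -> in_img g h y ->
  pcomm y (trfree (x ^+ M)).
Proof.
move=> Ix hX Iy; set X := x ^+ M.
have dX : \det X = 1 by apply: (in_img_det dg dh); apply: in_img_exp.
have uy : y \in unitmx by rewrite unitmxE (in_img_det dg dh Iy) unitr1.
have [tv dv] := spacelike_trfree dX hX.
apply: (conj_comm_pcomm tv (ltr0_neq0 dv) uy); rewrite -trfree_conj //; apply/eqP.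
rewrite comm_trfree; apply/eqP/esym; apply: hyperbolic_pcomm_comm => //.
  by rewrite unitmxE !det_mulmx det_inv (in_img_det dg dh Iy) dX invr1 !mulr1 unitr1.
rewrite /X conj_exp //; apply: pcomm_exp => //.
by apply: in_img_mul (in_img_inv dg dh Iy); apply: in_img_mul.
Qed.

End HyperbolicPower.

End Axis.

Section Moebius.
Variable R : realType.
Implicit Types (a c v : 'M[R]_2) (z : R * R).

Lemma m00_mx22 (a b c d : R) : m00 (mx22 a b c d) = a. Proof. by rewrite /m00 mxE. Qed.
Lemma m01_mx22 (a b c d : R) : m01 (mx22 a b c d) = b. Proof. by rewrite /m01 mxE. Qed.
Lemma m10_mx22 (a b c d : R) : m10 (mx22 a b c d) = c. Proof. by rewrite /m10 mxE. Qed.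
Lemma m11_mx22 (a b c d : R) : m11 (mx22 a b c d) = d. Proof. by rewrite /m11 mxE. Qed.
Definition mx22E := (m00_mx22, m01_mx22, m10_mx22, m11_mx22).

Lemma mob_mx22 (a b c d x y : R) : mob (mx22 a b c d) (x, y) =
  ((a * c * (x ^+ 2 + y ^+ 2) + (a * d + b * c) * x + b * d) /
     ((c * x + d) ^+ 2 + (c * y) ^+ 2),
   (a * d - b * c) * y / ((c * x + d) ^+ 2 + (c * y) ^+ 2)).
Proof. by rewrite /mob !mx22E. Qed.

Lemma mob_denom_gt0 (a b c d x y : R) : a * d - b * c = 1 -> 0 < y ->
  0 < (c * x + d) ^+ 2 + (c * y) ^+ 2.
Proof.
move=> det1 y0; have [c0|c0] := eqVneq c 0.
  by move: det1; rewrite c0 !mul0r add0r mulr0 subr0 expr0n addr0 => ad1; nra.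
have : 0 < (c * y) ^+ 2 by rewrite lt0r sqr_ge0 sqrf_eq0 andbT mulf_neq0 // gt_eqF.
by have := sqr_ge0 (c * x + d); lra.
Qed.

Definition mob_denom c z := (m10 c * z.1 + m11 c) ^+ 2 + (m10 c * z.2) ^+ 2.

Lemma mob_denom_pos c z : \det c = 1 -> inH z -> 0 < mob_denom c z.
Proof.
have [a [b [e [f ->]]]] := mx22P c; case: z => x y.
by rewrite det_mx22 /mob_denom !mx22E; apply: mob_denom_gt0.
Qed.

Lemma mob_inH c z : \det c = 1 -> inH z -> inH (mob c z).
Proof.
have [a [b [e [f ->]]]] := mx22P c; case: z => x y.
rewrite /inH det_mx22 mob_mx22 /= => det1 y0.
by rewrite det1 mul1r divr_gt0 // (mob_denom_gt0 _ det1).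
Qed.

Lemma mobM c c' z : \det c = 1 -> \det c' = 1 -> inH z ->
  mob c (mob c' z) = mob (c *m c') z.
Proof.
move=> dc dc' z0; have := mob_inH dc' z0; have dcc := sl2_mul dc dc'.
move: dc dc' dcc z0; have [p [q [r [s ->]]]] := mx22P c.
have [p' [q' [r' [s' ->]]]] := mx22P c'.
case: z => x y; rewrite /inH mul_mx22 !det_mx22 !mob_mx22 /= => dc dc' dcc y0.
set D := (r' * x + s') ^+ 2 + (r' * y) ^+ 2.
set N := p' * r' * _ + _ + _; set M := _ * y => Y0.
have D0 := lt0r_neq0 (mob_denom_gt0 x dc' y0).
have D1 : (r * N + s * D) ^+ 2 + (r * M) ^+ 2 != 0.
  have scale (n m d : R) : d != 0 -> (r * n + s * d) ^+ 2 + (r * m) ^+ 2 =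
      ((r * (n / d) + s) ^+ 2 + (r * (m / d)) ^+ 2) * d ^+ 2.
    by move=> ?; field.
  by rewrite scale // mulf_neq0 ?expf_neq0 // lt0r_neq0 // (mob_denom_gt0 _ dc Y0).
have D2 := lt0r_neq0 (mob_denom_gt0 x dcc y0).
by rewrite /D /N /M in D0 D1 *; congr pair; field; rewrite D0 D1 D2.
Qed.

Lemma mob1 z : mob 1%:M z = z.
Proof.
case: z => x y; rewrite scalar_mx22 mob_mx22.
have -> : (0 * x + 1) ^+ 2 + (0 * y) ^+ 2 = 1 :> R by ring.
by rewrite !divr1; congr pair; ring.
Qed.

Lemma mobK c z : \det c = 1 -> inH z -> mob c (mob (invmx c) z) = z.
Proof.
by move=> dc z0; rewrite mobM ?sl2_inv // mulmxV ?sl2_unit ?mob1.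
Qed.

(* [axis_eq v z = 0] for [v = mx22 a b c (- a)] is [c |z|^2 - 2 a x - b = 0]: the geodesic
   whose endpoints are the fixed points [c x^2 - 2 a x - b = 0] of [v] on the real line. *)
Definition axis_eq v z := m10 v * (z.1 ^+ 2 + z.2 ^+ 2) + (m11 v - m00 v) * z.1 - m01 v.

Definition axis v z := inH z /\ axis_eq v z = 0.

Lemma axis_eq_mob c v z : \det c = 1 -> inH z ->
  axis_eq v (mob c z) * mob_denom c z =
  axis_eq (invmx c *m v *m c) z.
Proof.
have [p [q [r [s ->]]]] := mx22P c; have [a [b [e [f ->]]]] := mx22P v.
case: z => x y; rewrite /inH det_mx22 => dc y0.
rewrite inv_mx22 // !mul_mx22 mob_mx22 /axis_eq /mob_denom !mx22E /=.
by have D0 := lt0r_neq0 (mob_denom_gt0 x dc y0); field.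
Qed.

Lemma mob_axis c v z : \det c = 1 -> c *m v = v *m c -> axis v z -> axis v (mob c z).
Proof.
move=> dc cv [z0 vz]; split; first exact: mob_inH.
have := axis_eq_mob v dc z0; rewrite -mulmxA -cv mulKmx ?sl2_unit // vz => /eqP.
by rewrite mulf_eq0 (gt_eqF (mob_denom_pos dc z0)) orbF => /eqP.
Qed.

Lemma geodesic_axis v : spacelike v -> geodesic (axis v).
Proof.
case=> /tracelessP [a [b [c ->]]]; rewrite det_mx22 => dv.
have axisE z : axis_eq (mx22 a b c (- a)) z = c * (z.1 ^+ 2 + z.2 ^+ 2) - 2 * a * z.1 - b.
  by rewrite /axis_eq !mx22E; ring.
have [c0|c0] := eqVneq c 0.
  have a0 : a != 0 by apply: contraTneq dv => ->; rewrite c0; lra.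
  left; exists (- b / (2 * a)) => z; rewrite /axis axisE c0 mul0r add0r.
  have a2 : 2 * a != 0 by rewrite mulf_neq0 ?pnatr_eq0.
  split=> -[z0 E]; split=> //; last by rewrite E; field.
  by apply: (mulIf a2); rewrite divfK //; lra.
right; exists (a / c), (Num.sqrt (a ^+ 2 + b * c) / `|c|).
have ab : 0 < a ^+ 2 + b * c by lra.
split; first by rewrite divr_gt0 ?sqrtr_gt0 ?normr_gt0.
move=> z; rewrite /axis axisE expr_div_n sqr_sqrtr ?ltW // real_normK ?num_real //.
have -> : c * (z.1 ^+ 2 + z.2 ^+ 2) - 2 * a * z.1 - b =
    c * ((z.1 - a / c) ^+ 2 + z.2 ^+ 2 - (a ^+ 2 + b * c) / c ^+ 2) by field.
split=> -[z0 E]; split=> //; last by rewrite E subrr mulr0.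
by move/eqP: E; rewrite mulf_eq0 (negPf c0) subr_eq0 => /eqP.
Qed.

End Moebius.

Section HalfTurns.
Variable R : realType.
Implicit Types (a b v : 'M[R]_2) (z : R * R).

Lemma sl2_traceless a : \tr a = 0 -> \det a = 1 ->
  exists p r, r != 0 /\ a = mx22 p (- (1 + p ^+ 2) / r) r (- p).
Proof.
move=> /tracelessP [p [q [r ->]]]; rewrite det_mx22 => da.
have r0 : r != 0 by apply/eqP => r0; move: da; rewrite r0; nra.
by exists p, r; split=> //; congr mx22; apply: (mulIf r0); rewrite divfK //; lra.
Qed.

Definition ht_center a : R * R := (m00 a / m10 a, 1 / `|m10 a|).

Lemma ht_centerP a : \tr a = 0 -> \det a = 1 ->
  inH (ht_center a) /\ half_turn (ht_center a) a.
Proof.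
move=> ta da; have a2 : a *m a = - 1%:M.
  by rewrite traceless_sq // da !scalar_mx22 opp_mx22 oppr0.
have a1 : ~ peq a 1%:M by case=> /(congr1 mxtrace); rewrite ta ?raddfN /= mxtrace1; lra.
have [p [r [r0 ea]]] := sl2_traceless ta da.
split; first by rewrite /inH /ht_center ea !mx22E divr_gt0 ?normr_gt0.
split; first by rewrite /elliptic ta normr0; lra.
split; first by right.
split=> //; rewrite /ht_center ea !mx22E mob_mx22 /=; have [r_ge0|r_lt0] := lerP 0 r;
  [rewrite ger0_norm // | rewrite ltr0_norm //]; congr pair; field.
all: by rewrite r0 /= subrr ?mul0r expr0n /= ?add0r ?oner_eq0 ?sqrf_eq0.
Qed.

Lemma ht_center_unique a z : \tr a = 0 -> \det a = 1 -> inH z -> mob a z = z ->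
  z = ht_center a.
Proof.
move=> ta da; have [p [r [r0 ->]]] := sl2_traceless ta da.
case: z => x y; rewrite /inH /ht_center !mx22E mob_mx22 /= => y0 [E1 E2].
set D := (r * x + - p) ^+ 2 + (r * y) ^+ 2 in E1 E2.
have D1 : D = 1.
  have dr : p * - p - - (1 + p ^+ 2) / r * r = 1 by field.
  have D0 : D != 0 by rewrite lt0r_neq0 // /D (mob_denom_gt0 x dr y0).
  move: E2; rewrite dr mul1r => /(congr1 ( *%R^~ D)); rewrite divfK // => yD.
  by apply: (mulfI (lt0r_neq0 y0)); rewrite mulr1 -yD.
have rx : r * x = p.
  move: E1; rewrite D1 divr1 => E1.
  have : r * (p * r * (x ^+ 2 + y ^+ 2) + (p * - p + - (1 + p ^+ 2) / r * r) * x +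
            - (1 + p ^+ 2) / r * - p) = 2 * p - r * x - p * (1 - D).
    by rewrite /D; field.
  by rewrite E1 D1 subrr mulr0 subr0 => ?; lra.
have ry : `|r| * y = 1.
  have : (`|r| * y) ^+ 2 = 1.
    by rewrite exprMn real_normK ?num_real // -exprMn -D1 /D rx subrr expr0n add0r.
  have : 0 < `|r| * y by rewrite mulr_gt0 ?normr_gt0.
  by move=> ? /eqP; rewrite sqrf_eq1 => /orP [] /eqP ?; lra.
by congr pair; [rewrite -rx | rewrite -ry]; rewrite mulrAC divff ?mul1r ?normr_eq0.
Qed.

Lemma ht_center_inj a b : \tr a = 0 -> \det a = 1 -> \tr b = 0 -> \det b = 1 ->
  ht_center a = ht_center b -> peq b a.
Proof.
move=> ta da tb db; have [p [r [r0 ->]]] := sl2_traceless ta da.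
have [p' [r' [r0' ->]]] := sl2_traceless tb db; rewrite /ht_center !mx22E => -[E1 E2].
have Nr : `|r'| = `|r| by move: E2; rewrite !div1r => /invr_inj.
have : r' ^+ 2 = r ^+ 2 by rewrite -[LHS]real_normK ?num_real // Nr real_normK ?num_real.
move/eqP; rewrite eqf_sqr => /orP [] /eqP Er; have Ep : p' = p / r * r' by rewrite E1 divfK.
  by left; rewrite Ep Er; congr mx22; field.
by right; rewrite Ep Er opp_mx22; congr mx22; field.
Qed.

Lemma ht_centerN a : ht_center (- a) = ht_center a.
Proof.
have [p [q [r [s ->]]]] := mx22P a.
by rewrite opp_mx22 /ht_center !mx22E normrN invrN mulrN mulNr opprK.
Qed.

Lemma axis_ht_center v a : \tr v = 0 -> \tr a = 0 -> \det a = 1 ->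
  a *m v = - (v *m a) -> axis_eq v (ht_center a) = 0.
Proof.
move=> /tracelessP [al [be [ga ->]]] ta da; have [p [r [r0 ->]]] := sl2_traceless ta da.
rewrite !mul_mx22 opp_mx22 => /mx22_inj [E _ _ _].
rewrite /axis_eq /ht_center !mx22E /=.
have -> : (1 / `|r|) ^+ 2 = 1 / r ^+ 2 by rewrite expr_div_n expr1n real_normK ?num_real.
have -> : ga * ((p / r) ^+ 2 + 1 / r ^+ 2) + (- al - al) * (p / r) - be =
    - (p * al + - (1 + p ^+ 2) / r * ga + (al * p + be * r)) / r by field.
by rewrite E addNr oppr0 mul0r.
Qed.

Lemma half_turn_traceless a z : \det a = 1 -> half_turn z a -> \tr a = 0.
Proof.
have [p [q [r [s ->]]]] := mx22P a; rewrite det_mx22 tr_mx22 => da [ell [sq _]].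
move: ell; rewrite /elliptic tr_mx22 ltr_norml => /andP [? ?].
have qps : q * (p + s) = 0.
  by case: sq; rewrite mul_mx22 scalar_mx22 ?opp_mx22 => /mx22_inj [? ? ? ?]; lra.
apply/eqP; apply: contraT => ps; move/eqP: qps; rewrite mulf_eq0 (negbTE ps) orbF => /eqP q0.
move: da; rewrite q0 mul0r subr0 => da; have ps2 := sqr_ge0 (p - s).
by exfalso; nra.
Qed.

End HalfTurns.

Section Configurations.
Variable R : realType.
Implicit Types a b c g h v : 'M[R]_2.

Lemma hyperbolic_centralizer v c : spacelike v -> \det c = 1 -> c *m v = v *m c ->
  ~ peq c 1%:M -> hyperbolic c.
Proof.
case=> tv dv dc /(centralizer_traceless tv (ltr0_neq0 dv)) [l [m ec]] c1.
move: dc dv; rewrite /hyperbolic ec; have [al [be [ga ->]]] := tracelessP tv.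
rewrite scale_mx22 scalar_mx22 add_mx22 !det_mx22 tr_mx22 => dc dv.
have [l0|l0] := eqVneq l 0.
  have : m ^+ 2 = 1 by move: dc; rewrite l0 !mul0r !add0r; lra.
  move/eqP; rewrite sqrf_eq1 => /orP [] /eqP m1; case: c1.
    by left; rewrite ec l0 scale0r add0r m1.
  by right; rewrite ec l0 scale0r add0r m1 !scalar_mx22 opp_mx22 oppr0.
have : 0 < l ^+ 2 by rewrite lt0r sqr_ge0 sqrf_eq0 l0.
by rewrite ltr_normr => ?; apply/orP; have [m0|m0] := lerP 0 m; [left | right]; nra.
Qed.

Lemma config_of_axis v a b c : spacelike v ->
  \det a = 1 -> \det b = 1 -> \det c = 1 ->
  a *m v = - (v *m a) -> b *m v = - (v *m b) -> c *m v = v *m c ->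
  ~ pcomm a b -> ~ peq c 1%:M -> config a b c.
Proof.
move=> sv da db dc av bv cv nab c1; have [tv dv] := sv.
have uv : v \in unitmx by rewrite unitmxE unitfE ltr0_neq0.
have ta := anticomm_tr0 uv av; have tb := anticomm_tr0 uv bv.
have [Ia HTa] := ht_centerP ta da; have [Ib HTb] := ht_centerP tb db.
have La : axis v (ht_center a) by split; last exact: axis_ht_center.
have Lb : axis v (ht_center b) by split; last exact: axis_ht_center.
exists (ht_center a), (ht_center b); split=> //; split=> //; split.
  move/(ht_center_inj ta da tb db) => ba; apply: nab.
  by apply: pcomm_peq (peq_refl a) ba _; exact: peq_refl.
split=> //; split=> //; split; first exact: (hyperbolic_centralizer sv).
split=> //; exists (axis v); split; first exact: geodesic_axis.
split=> //; split=> //; split=> [z|z Lz]; first exact: mob_axis.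
exists (mob (invmx c) z); split; last by apply: mobK => //; case: Lz.
by apply: mob_axis; rewrite ?sl2_inv // comm_invmx.
Qed.

Lemma axis_of_config a b c : \det a = 1 -> \det b = 1 -> config a b c ->
  exists v, [/\ spacelike v, a *m v = - (v *m a), b *m v = - (v *m b) & ~ pcomm a b].
Proof.
move=> da db [q1 [q2 [Iq1 [Iq2 [q12 [Ha [Hb _]]]]]]].
have ta := half_turn_traceless da Ha; have tb := half_turn_traceless db Hb.
have Eq1 : q1 = ht_center a by case: Ha => _ [_ [_ fix1]]; apply: ht_center_unique.
have Eq2 : q2 = ht_center b by case: Hb => _ [_ [_ fix2]]; apply: ht_center_unique.
have a_tl : 0 < \det a by rewrite da ltr01.
have nab : ~ pcomm a b.
  case=> [ab|/anticomm_trM tab].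
    have dba : \det b = \det a by rewrite da db.
    have [eb|eb] := traceless_comm_sign ta tb (lt0r_neq0 a_tl) dba (esym ab).
      by apply: q12; rewrite Eq1 Eq2 eb.
    by apply: q12; rewrite Eq1 Eq2 eb ht_centerN.
  have b0 : b = 0 by apply: orth_timelike_eq0 ta tb a_tl _ tab; rewrite db ler01.
  by move: db; rewrite b0 -mx22_0 det_mx22 mulr0 subrr => /eqP; rewrite eq_sym oner_eq0.
have sq1 (x : 'M[R]_2) : \tr x = 0 -> \det x = 1 -> x *m x = - 1%:M.
  by move=> tx dx; rewrite traceless_sq // dx !scalar_mx22 opp_mx22 oppr0.
have a2 := sq1 _ ta da; have b2 := sq1 _ tb db.
pose v := a *m b - b *m a.
have av : a *m v = - (v *m a).
  by rewrite mulmxBr mulmxBl !mulmxA a2 -!mulmxA a2 mulmxN mulNmx !mulmx1 !mul1mx opprB.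
have bv : b *m v = - (v *m b).
  by rewrite mulmxBr mulmxBl !mulmxA b2 -!mulmxA b2 mulmxN mulNmx !mulmx1 !mul1mx opprB.
exists v; split=> //; split; first by rewrite mxtraceD raddfN /= mxtrace_mulC subrr.
rewrite ltNge; apply/negP => dv; apply: nab; left; apply/eqP; rewrite -subr_eq0; apply/eqP.
apply: orth_timelike_eq0 ta _ a_tl dv (anticomm_trM av).
by rewrite mxtraceD raddfN /= mxtrace_mulC subrr.
Qed.

End Configurations.

Section Representations.
Variable R : realType.
Variables g h : 'M[R]_2.
Hypotheses (dg : \det g = 1) (dh : \det h = 1).
Implicit Types v x : 'M[R]_2.

Lemma in_img_comm v x : g *m v = v *m g -> h *m v = v *m h -> in_img g h x ->
  x *m v = v *m x.
Proof.
move=> gv hv; elim=> {x} [|x _ IH|x _ IH|x _ IH|x _ IH|x _ IH].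
- by rewrite mul1mx mulmx1.
- by rewrite mulNmx mulmxN IH.
all: by rewrite -mulmxA IH !mulmxA ?comm_invmx ?gv ?hv.
Qed.

Lemma virt_abelian_of_axis v : spacelike v -> pcomm g v -> pcomm h v -> virt_abelian g h.
Proof.
move=> [tv dv] gv hv; have uv : v \in unitmx by rewrite unitmxE unitfE ltr0_neq0.
have [Ig Ih _ _] := in_img_gens g h.
exists (fun x => in_img g h x /\ x *m v = v *m x).
split; first by move=> x [].
split; first by split; [constructor | rewrite mul1mx mulmx1].
split.
  by move=> x y [Ix xv] [Iy yv]; split; [apply: in_img_mul | rewrite -mulmxA yv !mulmxA xv].
split; first by move=> x [Ix xv]; split; [apply: in_img_inv | apply: comm_invmx].
split; first by move=> x y [_ xv] [_ yv]; left; exact: centralizer_comm (ltr0_neq0 dv) xv yv.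
(* The centralizer of [v] has index at most 2, with coset representatives among [1], [g], [h]. *)
exists [:: 1%:M; g; h] => x Ix; have dx := in_img_det dg dh Ix.
have [xv|xv] := in_img_pcomm dg dh gv hv Ix.
  by exists 1%:M; split; rewrite ?inE ?eqxx //; exists x; rewrite mul1mx; split=> //; left.
have coset c : in_img g h c -> c *m v = - (v *m c) -> exists a,
    (in_img g h a /\ a *m v = v *m a) /\ peq x (c *m a).
  move=> Ic cv; have uc : c \in unitmx by rewrite unitmxE (in_img_det dg dh Ic) unitr1.
  exists (invmx c *m x); rewrite mulKVmx //; split; last exact: peq_refl.
  split; first by apply: in_img_mul (in_img_inv dg dh Ic) Ix.
  by rewrite -mulmxA xv mulmxN !mulmxA anticomm_invmx // mulNmx opprK.
case: gv => [gv|gv]; last by exists g; split; rewrite ?inE ?eqxx ?orbT //; apply: coset.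
case: hv => [hv|hv]; last by exists h; split; rewrite ?inE ?eqxx ?orbT //; apply: coset.
have vx0 : v *m x = 0.
  have : 2 *: (v *m x) = 0.
    by rewrite scaler_nat mulr2n -[X in X + _](in_img_comm gv hv Ix) xv addNr.
  by move/eqP; rewrite scaler_eq0 pnatr_eq0 /= => /eqP.
have v0 : v = 0 by rewrite -[v](mulmxK (sl2_unit dx)) vx0 mul0mx.
by move: dv; rewrite v0 det0 ltxx.
Qed.

Lemma virt_abelian_axis : virt_abelian g h -> ~ pcomm g h ->
  exists v, [/\ spacelike v, pcomm g v & pcomm h v].
Proof.
move=> /(virt_abelian_exp_pcomm dg dh) [M M0 pcM] ngh.
have [Ig Ih Igi Ihi] := in_img_gens g h.
have [[x [Ix hx]] | no_hyp] := classic (exists x, in_img g h x /\ hyperbolic (x ^+ M)).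
  have axis_x := hyperbolic_exp_axis dg dh pcM Ix hx.
  exists (trfree (x ^+ M)); split; [|exact: axis_x | exact: axis_x].
  exact: spacelike_trfree (in_img_det dg dh (in_img_exp _ Ix)) hx.
have ell y : in_img g h y -> `|\tr y| <= 2.
  move=> Iy; rewrite leNgt; apply/negP => hy; apply: no_hyp; exists y; split=> //.
  exact: hyperbolic_exp (in_img_det dg dh Iy) hy M0.
case: ngh; left; apply: elliptic_comm => //; [exact: ell | exact: ell |].
exact: le_trans (ler_norm _) (ell _ (in_img_mul (in_img_mul (in_img_mul Ig Ih) Igi) Ihi)).
Qed.

Lemma config_of_pcomm_axis v : spacelike v -> pcomm g v -> pcomm h v -> ~ pcomm g h ->
  config g h (g *m h) \/ config g (g *m h) h \/ config h (g *m h) g.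
Proof.
move=> sv gv hv ngh; have [tv dv] := sv; have dgh := sl2_mul dg dh.
have [ug uh] := (sl2_unit dg, sl2_unit dh).
case: gv => gv; case: hv => hv.
- by case: ngh; left; apply: centralizer_comm tv (ltr0_neq0 dv) gv hv.
- right; right; apply: (config_of_axis sv) => //.
  + by rewrite -mulmxA hv mulmxN !mulmxA gv.
  + move=> hgh; apply: ngh; apply: pcomm_sym; apply: (peq_mul2r uh).
    by rewrite -mulmxA.
  + by move=> g1; apply: ngh; apply: pcomm_sym; apply: pcomm_peq1.
- right; left; apply: (config_of_axis sv) => //.
  + by rewrite -mulmxA hv !mulmxA gv mulNmx.
  + by move=> ggh; apply: ngh; apply: (peq_mul2l ug); rewrite [g *m (h *m g)]mulmxA.
  + by move=> h1; apply: ngh; apply: pcomm_peq1.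
- left; apply: (config_of_axis sv) => //.
  + by rewrite -mulmxA hv mulmxN !mulmxA gv mulNmx opprK.
  + by move=> gh1; apply: ngh; apply: pcomm_of_peq1.
Qed.

Lemma axis_of_configs :
  config g h (g *m h) \/ config g (g *m h) h \/ config h (g *m h) g ->
  exists v, [/\ spacelike v, pcomm g v, pcomm h v & ~ pcomm g h].
Proof.
have dgh := sl2_mul dg dh; have [ug uh] := (sl2_unit dg, sl2_unit dh).
case=> [|[]] /axis_of_config.
- by move=> /(_ dg dh) [v [sv gv hv ngh]]; exists v; split=> //; right.
- move=> /(_ dg dgh) [v [sv gv ghv nc]]; exists v; split=> //; first by right.
    by rewrite -[h](mulKmx ug); apply: pcommM; [apply: pcommV => //; right | right].
  by move=> gh; apply: nc; rewrite /pcomm -mulmxA; apply: peq_mull.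
- move=> /(_ dh dgh) [v [sv hv ghv nc]]; exists v; split=> //; last first.
  + by move=> gh; apply: nc; rewrite /pcomm mulmxA; apply: peq_mulr; apply: peq_sym.
  + by right.
  by rewrite -[g](mulmxK uh); apply: pcommM; [right | apply: pcommV => //; right].
Qed.

End Representations.

Unset Implicit Arguments.

Theorem lemma4p8 (R : realType) (g h : 'M[R]_2) :
  \det g = 1 -> \det h = 1 ->
  ((virt_abelian g h /\ ~ rep_abelian g h) <->
   (config g h (g *m h) \/ config g (g *m h) h \/ config h (g *m h) g)).
Proof.
move=> dg dh; split.
  case=> va na; have ngh : ~ pcomm g h by move/(rep_abelianP dg dh).
  have [v [sv gv hv]] := virt_abelian_axis dg dh va ngh.
  exact: config_of_pcomm_axis sv gv hv ngh.
move=> /(axis_of_configs dg dh) [v [sv gv hv ngh]].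
by split; [exact: virt_abelian_of_axis sv gv hv | move/(rep_abelianP dg dh)].
Qed.
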